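(* For every $\alpha$ with $1/2<\alpha<3/4$ and every $(x,y)\in[0,1]^2\setminus\{(0,0)\}$, we have $G_\alpha^n(x,y)\to(2/3,2/3)$ as $n\to\infty$. That is, the fixed point $(2/3,2/3)$ attracts all points of the square except the fixed point $(0,0)$.
   Context: Let $\tau:[0,1]\to[0,1]$ be the symmetric tent map, $\tau(x)=2x$ for $0\le x<1/2$ and $\tau(x)=2-2x$ for $1/2\le x\le 1$. For $0<\alpha<1$ define $G_\alpha:[0,1]^2\to[0,1]^2$ by $G_\alpha(x,y)=(y,\tau(\alpha y+(1-\alpha)x))$. *)

From Stdlib Require Import Reals Lra.
Open Scope R_scope.

Definition tent (x : R) : R :=
  if Rlt_dec x (1/2) then 2 * x else 2 - 2 * x.

Definition G (alpha : R) (p : R * R) : R * R :=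
  (snd p, tent (alpha * snd p + (1 - alpha) * fst p)).

Fixpoint Gn (alpha : R) (n : nat) (p : R * R) : R * R :=
  match n with
  | O => p
  | S k => G alpha (Gn alpha k p)
  end.

(* The quadratic form
     W(A, B) = (5 - 6a)/2 (A - 2/3)^2 + (A - 2/3)(B - 2/3) + (B - 2/3)^2
   is positive definite for a < 3/4 and, along an orbit (A, B) -> (B, C), drops by at least
   (3 - 4a)(2a - 1)/2 (B - A)^2: with equality when the tent is on its right branch, and by
   more on its left branch.  Hence consecutive coordinates of an orbit become arbitrarily close.
   An orbit away from (0,0) cannot stay on the left branch forever, since there
   B + (1 - a) A grows at least by the factor 1 + a per step while staying bounded; and once two
   consecutive steps are small, the right branch forces the weighted mean aB + (1 - a)A to be
   close to 2/3 (or, on the left branch, close to 0), and small steps cannot jump between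
   these two regions.  So the mean, hence the orbit, converges to 2/3. *)

From Stdlib Require Import Reals Lra Lia Classical.
Open Scope R_scope.

Lemma tent_range z : 0 <= z <= 1 -> 0 <= tent z <= 1.
Proof. intros H; unfold tent; destruct (Rlt_dec z (1/2)); lra. Qed.

Lemma G_square a p : 0 <= a <= 1 ->
  0 <= fst p <= 1 -> 0 <= snd p <= 1 ->
  0 <= fst (G a p) <= 1 /\ 0 <= snd (G a p) <= 1.
Proof. destruct p as [A B]; simpl; intros; split; [lra | apply tent_range; nra]. Qed.

Lemma Gn_square a p n : 0 <= a <= 1 ->
  0 <= fst p <= 1 -> 0 <= snd p <= 1 ->
  0 <= fst (Gn a n p) <= 1 /\ 0 <= snd (Gn a n p) <= 1.
Proof.
  intros Ha Hx Hy; induction n as [|n [IH1 IH2]]; [easy|].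
  now apply G_square.
Qed.

Lemma G_eq_origin a p : 0 < a < 1 ->
  0 <= fst p <= 1 -> 0 <= snd p <= 1 -> G a p = (0, 0) -> p = (0, 0).
Proof.
  destruct p as [A B]; simpl; intros Ha HA HB HG; injection HG as -> Htent.
  f_equal; revert Htent; unfold tent; destruct (Rlt_dec _ (1/2)); intros; nra.
Qed.

Lemma Gn_neq_origin a p n : 0 < a < 1 ->
  0 <= fst p <= 1 -> 0 <= snd p <= 1 -> p <> (0, 0) -> Gn a n p <> (0, 0).
Proof.
  intros Ha Hx Hy Hp; induction n as [|n IH]; [easy|].
  destruct (Gn_square a p n) as [H1 H2]; try lra.
  intro Hn; apply IH; now apply G_eq_origin with a.
Qed.

Definition lyap (a A B : R) : R :=
  (5 - 6 * a) / 2 * (A - 2/3) ^ 2 + (A - 2/3) * (B - 2/3) + (B - 2/3) ^ 2.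

Lemma lyap_nonneg a A B : a <= 3/4 -> 0 <= lyap a A B.
Proof.
  intros Ha.
  assert (Hsq : lyap a A B = ((A - 2/3) / 2 + (B - 2/3)) ^ 2 + 3 * (3 - 4 * a) / 4 * (A - 2/3) ^ 2)
    by (unfold lyap; field).
  rewrite Hsq.
  pose proof (pow2_ge_0 ((A - 2/3) / 2 + (B - 2/3))); pose proof (pow2_ge_0 (A - 2/3)); nra.
Qed.

Lemma lyap_tent_step a A B : 0 <= B ->
  lyap a B (tent (a * B + (1 - a) * A)) + (3 - 4 * a) * (2 * a - 1) / 2 * (B - A) ^ 2
  <= lyap a A B.
Proof.
  intros HB; unfold tent; set (z := a * B + (1 - a) * A).
  destruct (Rlt_dec z (1/2)) as [Hz | Hz].
  - assert (Heq : lyap a B (2 * z) + (3 - 4 * a) * (2 * a - 1) / 2 * (B - A) ^ 2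
                  = lyap a A B + (4 * z - 2) * B) by (unfold lyap, z; field).
    rewrite Heq; nra.
  - assert (Heq : lyap a B (2 - 2 * z) + (3 - 4 * a) * (2 * a - 1) / 2 * (B - A) ^ 2
                  = lyap a A B) by (unfold lyap, z; field).
    lra.
Qed.

Lemma square_dissipation_cv0 (W d : nat -> R) (c : R) : 0 < c ->
  (forall n, 0 <= W n) -> (forall n, W (S n) + c * d n ^ 2 <= W n) -> Un_cv d 0.
Proof.
  intros Hc Hpos Hstep.
  destruct (decreasing_cv W) as [l Hl].
  - intro n; pose proof (Hstep n); pose proof (pow2_ge_0 (d n)); nra.
  - exists 0; intros r [i ->]; unfold opp_seq; pose proof (Hpos i); lra.
  - intros eps Heps.
    pose proof (pow_lt eps 2 Heps).
    destruct (Hl (c * eps ^ 2 / 2)) as [N HN]; [nra|].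
    exists N; intros n Hn; unfold R_dist in *.
    pose proof (HN n Hn) as H1; pose proof (HN (S n) ltac:(lia)) as H2.
    apply Rabs_def2 in H1; apply Rabs_def2 in H2.
    pose proof (Hstep n).
    assert (Hsq : d n ^ 2 < eps ^ 2) by nra.
    rewrite Rminus_0_r; apply Rabs_def1; nra.
Qed.

Lemma not_eventually_expanding (h : nat -> R) (c M : R) (N : nat) :
  0 < c -> 0 < h N -> (forall n, h n <= M) ->
  ~ (forall n, (N <= n)%nat -> (1 + c) * h n <= h (S n)).
Proof.
  intros Hc HN HM Hexp.
  assert (Hlin : forall m, (1 + INR m * c) * h N <= h (m + N)%nat).
  { induction m as [|m IH]; [simpl; lra|].
    rewrite S_INR; simpl plus.
    pose proof (Hexp (m + N)%nat ltac:(lia)).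
    assert (0 <= INR m * c * h N) by (pose proof (pos_INR m); apply Rmult_le_pos; nra).
    assert (h N <= h (m + N)%nat) by lra.
    nra. }
  destruct (INR_archimed (c * h N) M) as [m Hm]; [nra|].
  pose proof (Hlin m); pose proof (HM (m + N)%nat); nra.
Qed.

Section TentRecurrence.

Variables (a : R) (v : nat -> R).

Hypothesis Ha : 1/2 < a < 3/4.
Hypothesis Hrange : forall n, 0 <= v n <= 1.
Hypothesis Hrec : forall n, v (S (S n)) = tent (a * v (S n) + (1 - a) * v n).

Definition wmean n := a * v (S n) + (1 - a) * v n.

Lemma increments_cv0 : Un_cv (fun n => v (S n) - v n) 0.
Proof.
  apply (square_dissipation_cv0 (fun n => lyap a (v n) (v (S n))) _
           ((3 - 4 * a) * (2 * a - 1) / 2)); [nra | |].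
  - intro n; apply lyap_nonneg; lra.
  - intro n; simpl; rewrite Hrec; apply lyap_tent_step, Hrange.
Qed.

Lemma wmean_frequently_right : (forall n, (v n, v (S n)) <> (0, 0)) ->
  forall N, exists n, (N <= n)%nat /\ 1/2 <= wmean n.
Proof.
  intros Hnz N; apply NNPP; intro Hleft.
  apply (not_eventually_expanding (fun n => v (S n) + (1 - a) * v n) a 2 N); [lra | | |].
  - pose proof (Hrange N); pose proof (Hrange (S N)).
    destruct (Req_dec (v N) 0) as [E0|E0]; destruct (Req_dec (v (S N)) 0) as [E1|E1];
      [now elim (Hnz N); rewrite E0, E1 | nra | nra | nra].
  - intro n; pose proof (Hrange n); pose proof (Hrange (S n)); nra.
  - intros n Hn; simpl; rewrite Hrec.
    assert (Hz : wmean n < 1/2) by (apply Rnot_le_lt; intro; apply Hleft; now exists n).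
    unfold wmean in Hz; unfold tent; destruct (Rlt_dec _ (1/2)); [|lra].
    assert (0 <= (1 - a) * (1 - a) * v n)
      by (pose proof (Hrange n); apply Rmult_le_pos; [apply Rmult_le_pos|]; lra).
    lra.
Qed.

Section SmallIncrements.

Variables (d : R) (n : nat).
Hypothesis Hd1 : Rabs (v (S n) - v n) < d.
Hypothesis Hd2 : Rabs (v (S (S n)) - v (S n)) < d.

Lemma wmean_near_tent_fixed_points : wmean n < 2 * d \/ Rabs (wmean n - 2/3) < d.
Proof.
  apply Rabs_def2 in Hd1; apply Rabs_def2 in Hd2.
  assert (Hgap : v (S n) - wmean n = (1 - a) * (v (S n) - v n)) by (unfold wmean; ring).
  pose proof (Hrec n) as Htent; fold (wmean n) in Htent; unfold tent in Htent.
  destruct (Rlt_dec (wmean n) (1/2)); [left | right; apply Rabs_def1]; nra.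
Qed.

Lemma wmean_step_small : Rabs (wmean (S n) - wmean n) < d.
Proof.
  apply Rabs_def2 in Hd1; apply Rabs_def2 in Hd2.
  assert (Hstep : wmean (S n) - wmean n
                  = a * (v (S (S n)) - v (S n)) + (1 - a) * (v (S n) - v n))
    by (unfold wmean; ring).
  rewrite Hstep; apply Rabs_def1; nra.
Qed.

End SmallIncrements.

Lemma wmean_cv : (forall n, (v n, v (S n)) <> (0, 0)) -> Un_cv wmean (2/3).
Proof.
  intros Hnz eps Heps.
  set (d := Rmin eps (1/10)).
  assert (Hd : 0 < d <= 1/10) by (unfold d; split; [apply Rmin_glb_lt | apply Rmin_r]; lra).
  destruct (increments_cv0 d ltac:(lra)) as [N HN].
  assert (Hsmall : forall n, (N <= n)%nat -> Rabs (v (S n) - v n) < d).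
  { intros n Hn; specialize (HN n Hn); unfold R_dist in HN; now rewrite Rminus_0_r in HN. }
  destruct (wmean_frequently_right Hnz N) as [n0 [Hn0 Hright]].
  assert (Htrap : forall j, Rabs (wmean (j + n0) - 2/3) < d).
  { induction j as [|j IH]; simpl plus.
    - destruct (wmean_near_tent_fixed_points d n0 (Hsmall n0 Hn0) (Hsmall (S n0) ltac:(lia)))
        as [H|H]; [lra | exact H].
    - set (n := (j + n0)%nat) in *.
      pose proof (wmean_step_small d n (Hsmall n ltac:(lia)) (Hsmall (S n) ltac:(lia))) as Hs.
      destruct (wmean_near_tent_fixed_points d (S n) (Hsmall (S n) ltac:(lia))
                  (Hsmall (S (S n)) ltac:(lia))) as [H|H]; [|exact H].
      apply Rabs_def2 in IH; apply Rabs_def2 in Hs; lra. }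
  exists n0; intros n Hn; unfold R_dist.
  replace n with ((n - n0) + n0)%nat by lia.
  assert (d <= eps) by apply Rmin_l.
  pose proof (Htrap (n - n0)%nat); lra.
Qed.

Lemma tent_recurrence_cv : (forall n, (v n, v (S n)) <> (0, 0)) -> Un_cv v (2/3).
Proof.
  intros Hnz.
  assert (Hconst : Un_cv (fun _ => a) a).
  { intros eps Heps; exists 0%nat; intros; unfold R_dist; rewrite Rminus_diag, Rabs_R0; lra. }
  pose proof (CV_minus _ _ _ _ (wmean_cv Hnz) (CV_mult _ _ _ _ Hconst increments_cv0)) as Hcv.
  rewrite Rmult_0_r, Rminus_0_r in Hcv.
  refine (Un_cv_ext _ _ _ _ Hcv); intro n; simpl; unfold wmean; ring.
Qed.

End TentRecurrence.

Theorem theorem6 :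
  forall (alpha x y : R),
    1/2 < alpha < 3/4 ->
    0 <= x <= 1 -> 0 <= y <= 1 ->
    (x, y) <> (0, 0) ->
    Un_cv (fun n => fst (Gn alpha n (x, y))) (2/3) /\
    Un_cv (fun n => snd (Gn alpha n (x, y))) (2/3).
Proof.
  intros a x y Ha Hx Hy Hxy.
  set (v := fun n => fst (Gn a n (x, y))).
  assert (Hsnd : forall n, snd (Gn a n (x, y)) = v (S n)) by reflexivity.
  assert (Hv : Un_cv v (2/3)).
  { apply (tent_recurrence_cv a); [lra | | reflexivity |].
    - intro n; apply (Gn_square a (x, y) n); simpl; lra.
    - intro n; change ((fst (Gn a n (x, y)), snd (Gn a n (x, y))) <> (0, 0)).
      rewrite <- surjective_pairing.
      apply Gn_neq_origin; simpl; auto; lra. }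
  split; [exact Hv|].
  apply (Un_cv_ext (fun n => v (n + 1)%nat)); [intro n; now rewrite Hsnd, Nat.add_1_r|].
  now apply CV_shift'.
Qed.
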